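(* Fix a class table and a security lattice as described in the context. Let $\Gamma$ be a typing context and $T$ a type. Suppose an expression $e$ that contains no abstract expressions is obtained from a single abstract expression $\mathit{eA}:[\Gamma;T]$ by a finite sequence of applications of the refinement rules (R1)–(R8) listed in the context, where each step is applied to some occurrence of an abstract expression anywhere inside the current expression. Then $e$ is well typed in SIFO with $\Gamma \vdash e : T$.
   Context: Security levels form a bounded upper semi-lattice $(L,\le)$ with least element $\bot$; $\mathit{lub}$ denotes least upper bound. Type modifiers: $\mathit{mdf}\in\{\mathtt{mut},\mathtt{imm},\mathtt{capsule},\mathtt{read}\}$, ordered by $\mathtt{capsule}\le \mathit{mdf}\le\mathtt{read}$ for every $\mathit{mdf}$ (reflexive; $\mathtt{mut}$ and $\mathtt{imm}$ incomparable). A type is $T = s\ \mathit{mdf}\ C$ with $s\in L$ and $C$ a class/interface name; $\mathit{sec}(T)=s$, $\mathit{mdf}(T)=\mathit{mdf}$, $\mathit{class}(T)=C$. A fixed class table gives classes $\mathtt{class}\ C\ \mathtt{implements}\ \overline{C}\ \{\overline F\ \overline{MD}\}$ and interfaces $\mathtt{interface}\ C\ \mathtt{extends}\ \overline C\ \{\overline{MH}\}$; $C\le C'$ is the reflexive–transitive closure of implements/extends. Fields have the form $s\ \mathtt{mut}\ C\ f$ or $s\ \mathtt{imm}\ C\ f$; $\mathit{fields}(C)$ is the ordered list $T_1 f_1\dots T_n f_n$ of fields of $C$. Method headers have the form $s\ \mathit{mdf}\ \mathtt{method}\ T\ m(T_1 x_1,\dots,T_n x_n)$. Subtyping: $s\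 \mathit{mdf}\ C\le s\ \mathit{mdf}'\ C'$ iff $C\le C'$ and $\mathit{mdf}\le\mathit{mdf}'$. For $T=s'\ \mathit{mdf}\ C$, $T[s]=\mathit{lub}(s,s')\ \mathit{mdf}\ C$, defined only if $s\le s'$ or $s'\le s$. The partial operation $\triangleright$ on modifiers: $\mathtt{mut}\triangleright \mathit{mdf}=\mathtt{capsule}\triangleright\mathit{mdf}=\mathit{mdf}$; $\mathtt{imm}\triangleright\mathit{mdf}=\mathit{mdf}\triangleright\mathtt{imm}=\mathtt{imm}$; $\mathtt{read}\triangleright\mathtt{mut}=\mathtt{read}$. $\mathit{methTypes}(C,m)$: if $s\ \mathit{mdf}\ \mathtt{method}\ T\ m(T_1x_1\dots T_nx_n)$ is declared in $C$ and $T_0=s\ \mathit{mdf}\ C$, then for every $s'\in L$ (where defined) it contains $T_0[s']\dots T_n[s']\to T[s']$, the same signature with every $\mathtt{mut}$ replaced by $\mathtt{capsule}$, and the same signature with every $\mathtt{read}$ replaced by $\mathtt{imm}$ and every $\mathtt{mut}$ by $\mathtt{capsule}$. Expressions (core fragment): $e ::= \mathit{eA}\mid x\mid e_0.f=e_1\mid e.f\mid e_0.m(e_1,\dots,e_n)\mid \mathtt{new}\ s\ C(e_1,\dots,e_n)$, where $\mathit{eA}$ ranges over abstract expressions, each annotated $\mathit{eA}:[\Gamma;T]$. A typing context is $\Gamma = x_1:T_1,\dots,x_n:T_n$; $\Gamma[\mathtt{mut}\backslash\mathtt{read}]$ replaces each $\mathtt{mut}$ modifier in $\Gamma$ by $\mathtt{read}$.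 SIFO typing ($\Gamma\vdash e:T$) is the least relation closed under: (Subsumption) $\Gamma\vdash e:T'$, $T'\le T$ $\Rightarrow$ $\Gamma\vdash e:T$; (T-Var) $\Gamma\vdash x:\Gamma(x)$; (Field Access) $\Gamma\vdash e_0:s_0\ \mathit{mdf}_0\ C_0$, $s_1\ \mathit{mdf}_1\ C_1\ f\in\mathit{fields}(C_0)$ $\Rightarrow$ $\Gamma\vdash e_0.f:\mathit{lub}(s_0,s_1)\ (\mathit{mdf}_0\triangleright\mathit{mdf}_1)\ C_1$; (Field Assign) $\Gamma\vdash e_0:s_0\ \mathtt{mut}\ C_0$, $\Gamma\vdash e_1:\mathit{lub}(s_0,s)\ \mathit{mdf}\ C$, $s\ \mathit{mdf}\ C\ f\in\mathit{fields}(C_0)$ $\Rightarrow$ $\Gamma\vdash e_0.f=e_1:\mathit{lub}(s_0,s)\ \mathit{mdf}\ C$; (Call) $\Gamma\vdash e_i:T_i$ for $i=0..n$, $T_0\dots T_n\to T\in\mathit{methTypes}(\mathit{class}(T_0),m)$, $\mathit{sec}(T)\ge\mathit{sec}(T_0)$, and $\mathit{sec}(T_i)\ge\mathit{sec}(T_0)$ whenever $\mathit{mdf}(T_i)\in\{\mathtt{mut},\mathtt{capsule}\}$ $\Rightarrow$ $\Gamma\vdash e_0.m(e_1\dots e_n):T$; (New) $\mathit{fields}(C)=T_1f_1\dots T_nf_n$, $\Gamma\vdash e_i:T_i[s]$ for all $i$ $\Rightarrow$ $\Gamma\vdash\mathtt{new}\ s\ C(e_1\dots e_n):s\ \mathtt{mut}\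 C$; (Prom) $\Gamma[\mathtt{mut}\backslash\mathtt{read}]\vdash e:s\ \mathtt{mut}\ C$ $\Rightarrow$ $\Gamma\vdash e:s\ \mathtt{capsule}\ C$; (Sec-Prom) $s'\le s$, $\Gamma\vdash e:s'\ \mathit{mdf}\ C$, $\mathit{mdf}\in\{\mathtt{imm},\mathtt{capsule}\}$ $\Rightarrow$ $\Gamma\vdash e:s\ \mathit{mdf}\ C$. Refinement rules (new abstract expressions are fresh, with the stated annotations): (R1 Variable) $\mathit{eA}:[\Gamma;T]$ becomes $x$ if $\Gamma(x)=T$. (R2 Field Assignment) $\mathit{eA}:[\Gamma;s_1\ \mathit{mdf}\ C]$ becomes $\mathit{eA}_0.f=\mathit{eA}_1$ with $\mathit{eA}_0:[\Gamma;s_0\ \mathtt{mut}\ C_0]$, $\mathit{eA}_1:[\Gamma;s_1\ \mathit{mdf}\ C]$, if $s\ \mathit{mdf}\ C\ f\in\mathit{fields}(C_0)$ and $s_1=\mathit{lub}(s_0,s)$. (R3 Field Access) $\mathit{eA}:[\Gamma;s\ \mathit{mdf}\ C]$ becomes $\mathit{eA}_0.f$ with $\mathit{eA}_0:[\Gamma;s_0\ \mathit{mdf}_0\ C_0]$, if $s_1\ \mathit{mdf}_1\ C\ f\in\mathit{fields}(C_0)$, $s=\mathit{lub}(s_0,s_1)$, $\mathit{mdf}_0\triangleright\mathit{mdf}_1=\mathit{mdf}$. (R4 Method Call) $\mathit{eA}:[\Gamma;T]$ becomes $\mathit{eA}_0.m(\mathit{eA}_1,\dots,\mathit{eA}_n)$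 with $\mathit{eA}_i:[\Gamma;T_i]$, if $T_0\dots T_n\to T\in\mathit{methTypes}(\mathit{class}(T_0),m)$, $\mathit{sec}(T)\ge\mathit{sec}(T_0)$, and for all $i\in\{1..n\}$ with $\mathit{mdf}(T_i)\in\{\mathtt{mut},\mathtt{capsule}\}$, $\mathit{sec}(T_i)\ge\mathit{sec}(T_0)$. (R5 Constructor) $\mathit{eA}:[\Gamma;s\ \mathtt{mut}\ C]$ becomes $\mathtt{new}\ s\ C(\mathit{eA}_1\dots\mathit{eA}_n)$ with $\mathit{eA}_i:[\Gamma;T_i[s]]$, if $\mathit{fields}(C)=T_1f_1\dots T_nf_n$. (R6 Subsumption) $\mathit{eA}:[\Gamma;T]$ becomes $\mathit{eA}_1:[\Gamma;T']$ if $T'\le T$. (R7 Security Promotion) $\mathit{eA}:[\Gamma;s\ \mathit{mdf}\ C]$ becomes $\mathit{eA}_1:[\Gamma;s'\ \mathit{mdf}\ C]$ if $\mathit{mdf}\in\{\mathtt{capsule},\mathtt{imm}\}$ and $s'\le s$. (R8 Modifier Promotion) $\mathit{eA}:[\Gamma;s\ \mathtt{capsule}\ C]$ becomes $\mathit{eA}_1:[\Gamma[\mathtt{mut}\backslash\mathtt{read}];s\ \mathtt{mut}\ C]$. *)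

From HB Require Import structures.
From mathcomp Require Import all_boot all_order.
From Stdlib Require List Relations.

Set Implicit Arguments.
Unset Strict Implicit.
Unset Printing Implicit Defensive.

Import Order.TTheory.
Local Open Scope order_scope.

Definition var := nat.
Definition fname := nat.
Definition mname := nat.
Definition cname := nat.

Inductive mdf := Mut | Imm | Capsule | Read.

Definition mdf_le (a b : mdf) : Prop := a = b \/ a = Capsule \/ b = Read.

Definition mdf_tri (a b : mdf) : option mdf :=
  match a, b with
  | Mut, _ => Some b
  | Capsule, _ => Some b
  | Imm, _ => Some Imm
  | _, Imm => Some Imm
  | Read, Mut => Some Read
  | _, _ => None
  end.

Inductive fmdf := FMut | FImm.
Definition mdf_of_fmdf (f : fmdf) : mdf := match f with FMut => Mut | FImm => Imm end.

Section SIFO.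
Context {disp : Order.disp_t} (L : tbJoinSemilatticeType disp).

Record ty := Ty { sec : L; tmdf : mdf; tcls : cname }.

Record fdecl := FD { fd_sec : L; fd_mdf : fmdf; fd_cls : cname; fd_name : fname }.
Definition fd_ty (fd : fdecl) : ty := Ty (fd_sec fd) (mdf_of_fmdf (fd_mdf fd)) (fd_cls fd).

Record mheader := MH { mh_sec : L; mh_mdf : mdf; mh_ret : ty; mh_name : mname;
                       mh_params : list (ty * var) }.

(* class / interface declarations (method bodies are irrelevant here) *)
Inductive decl :=
  | DClass (impls : list cname) (fields : list fdecl) (meths : list mheader)
  | DInterface (exts : list cname) (meths : list mheader).

Definition classtable := cname -> option decl.

Definition ctx := list (var * ty).

Fixpoint lookup (G : ctx) (x : var) : option ty :=
  match G with
  | nil => None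
  | (y, T) :: G' => if x == y then Some T else lookup G' x
  end.

Definition mut_to_read (T : ty) : ty :=
  Ty (sec T) (match tmdf T with Mut => Read | m => m end) (tcls T).

Definition ctx_mut_read (G : ctx) : ctx := map (fun p => (p.1, mut_to_read p.2)) G.

Definition lift (s : L) (T : ty) : option ty :=
  if (s <= sec T) || (sec T <= s) then Some (Ty (s `|` sec T) (tmdf T) (tcls T))
  else None.

Fixpoint omap_list {A B : Type} (f : A -> option B) (l : list A) : option (list B) :=
  match l with
  | nil => Some nil
  | x :: r => match f x, omap_list f r with
              | Some y, Some r' => Some (y :: r')
              | _, _ => None
              end
  end.

Definition sig := (list ty * ty)%type.

Definition map_sig (g : ty -> ty) (sg : sig) : sig := (map g sg.1, g sg.2).

Definition mut_to_capsule (T : ty) : ty :=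
  Ty (sec T) (match tmdf T with Mut => Capsule | m => m end) (tcls T).

Definition read_imm_mut_capsule (T : ty) : ty :=
  Ty (sec T) (match tmdf T with Mut => Capsule | Read => Imm | m => m end) (tcls T).

Definition lift_sig (s : L) (sg : sig) : option sig :=
  match omap_list (lift s) sg.1, lift s sg.2 with
  | Some ts, Some t => Some (ts, t)
  | _, _ => None
  end.

Section CT.
Variable CT : classtable.

Definition fields (C : cname) : option (list fdecl) :=
  match CT C with Some (DClass _ fs _) => Some fs | _ => None end.

Definition field_in (fd : fdecl) (C : cname) : Prop :=
  exists fs, fields C = Some fs /\ List.In fd fs.

Definition methods (C : cname) : list mheader :=
  match CT C with
  | Some (DClass _ _ ms) => ms
  | Some (DInterface _ ms) => ms
  | None => nil
  end.

Definition direct_super (C C' : cname) : Prop :=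
  match CT C with
  | Some (DClass impls _ _) => List.In C' impls
  | Some (DInterface exts _) => List.In C' exts
  | None => False
  end.

Definition csub : cname -> cname -> Prop :=
  Relation_Operators.clos_refl_trans cname direct_super.

Definition subty (T T' : ty) : Prop :=
  sec T = sec T' /\ csub (tcls T) (tcls T') /\ mdf_le (tmdf T) (tmdf T').

Definition methTypes (C : cname) (m : mname) (sg : sig) : Prop :=
  exists mh, List.In mh (methods C) /\ mh_name mh = m /\
    exists s' lsg,
      lift_sig s' (Ty (mh_sec mh) (mh_mdf mh) C :: map fst (mh_params mh), mh_ret mh)
        = Some lsg /\
      (sg = lsg \/ sg = map_sig mut_to_capsule lsg \/
       sg = map_sig read_imm_mut_capsule lsg).

(* Expressions (core fragment); abstract expressions carry their annotation *)
Inductive expr :=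
  | EAbs (G : ctx) (T : ty)
  | EVar (x : var)
  | EAssign (e0 : expr) (f : fname) (e1 : expr)
  | EField (e : expr) (f : fname)
  | ECall (e0 : expr) (m : mname) (es : list expr)
  | ENew (s : L) (C : cname) (es : list expr).

Fixpoint concrete (e : expr) : bool :=
  match e with
  | EAbs _ _ => false
  | EVar _ => true
  | EAssign e0 _ e1 => concrete e0 && concrete e1
  | EField e0 _ => concrete e0
  | ECall e0 _ es =>
      concrete e0 && (fix go (l : list expr) : bool :=
                        match l with nil => true | x :: r => concrete x && go r end) es
  | ENew _ _ es =>
      (fix go (l : list expr) : bool :=
         match l with nil => true | x :: r => concrete x && go r end) es
  end.

Definition is_mut_or_capsule (m : mdf) : Prop := m = Mut \/ m = Capsule.
Definition is_imm_or_capsule (m : mdf) : Prop := m = Imm \/ m = Capsule.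

Inductive typing : ctx -> expr -> ty -> Prop :=
  | T_Sub G e T T' :
      typing G e T' -> subty T' T -> typing G e T
  | T_Var G x T :
      lookup G x = Some T -> typing G (EVar x) T
  | T_Field G e0 s0 m0 C0 fd m :
      typing G e0 (Ty s0 m0 C0) -> field_in fd C0 ->
      mdf_tri m0 (mdf_of_fmdf (fd_mdf fd)) = Some m ->
      typing G (EField e0 (fd_name fd)) (Ty (s0 `|` fd_sec fd) m (fd_cls fd))
  | T_Assign G e0 e1 s0 C0 fd :
      typing G e0 (Ty s0 Mut C0) ->
      typing G e1 (Ty (s0 `|` fd_sec fd) (mdf_of_fmdf (fd_mdf fd)) (fd_cls fd)) ->
      field_in fd C0 ->
      typing G (EAssign e0 (fd_name fd) e1)
             (Ty (s0 `|` fd_sec fd) (mdf_of_fmdf (fd_mdf fd)) (fd_cls fd))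
  | T_Call G e0 es m T0 Ts T :
      typing G e0 T0 ->
      List.Forall2 (typing G) es Ts ->
      methTypes (tcls T0) m (T0 :: Ts, T) ->
      sec T0 <= sec T ->
      (forall Ti, List.In Ti Ts -> is_mut_or_capsule (tmdf Ti) -> sec T0 <= sec Ti) ->
      typing G (ECall e0 m es) T
  | T_New G s C es fs Ts :
      fields C = Some fs ->
      omap_list (lift s) (map fd_ty fs) = Some Ts ->
      List.Forall2 (typing G) es Ts ->
      typing G (ENew s C es) (Ty s Mut C)
  | T_Prom G e s C :
      typing (ctx_mut_read G) e (Ty s Mut C) -> typing G e (Ty s Capsule C)
  | T_SecProm G e s s' m C :
      s' <= s -> typing G e (Ty s' m C) -> is_imm_or_capsule m ->
      typing G e (Ty s m C).

Inductive refine_root : expr -> expr -> Prop :=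
  | R1_Var G T x :
      lookup G x = Some T -> refine_root (EAbs G T) (EVar x)
  | R2_Assign G s0 C0 fd s1 :
      field_in fd C0 -> s1 = s0 `|` fd_sec fd ->
      refine_root (EAbs G (Ty s1 (mdf_of_fmdf (fd_mdf fd)) (fd_cls fd)))
        (EAssign (EAbs G (Ty s0 Mut C0)) (fd_name fd)
                 (EAbs G (Ty s1 (mdf_of_fmdf (fd_mdf fd)) (fd_cls fd))))
  | R3_Field G s m s0 m0 C0 fd :
      field_in fd C0 -> s = s0 `|` fd_sec fd ->
      mdf_tri m0 (mdf_of_fmdf (fd_mdf fd)) = Some m ->
      refine_root (EAbs G (Ty s m (fd_cls fd)))
        (EField (EAbs G (Ty s0 m0 C0)) (fd_name fd))
  | R4_Call G T T0 Ts m :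
      methTypes (tcls T0) m (T0 :: Ts, T) ->
      sec T0 <= sec T ->
      (forall Ti, List.In Ti Ts -> is_mut_or_capsule (tmdf Ti) -> sec T0 <= sec Ti) ->
      refine_root (EAbs G T) (ECall (EAbs G T0) m (map (EAbs G) Ts))
  | R5_New G s C fs Ts :
      fields C = Some fs ->
      omap_list (lift s) (map fd_ty fs) = Some Ts ->
      refine_root (EAbs G (Ty s Mut C)) (ENew s C (map (EAbs G) Ts))
  | R6_Sub G T T' :
      subty T' T -> refine_root (EAbs G T) (EAbs G T')
  | R7_SecProm G s s' m C :
      is_imm_or_capsule m -> s' <= s ->
      refine_root (EAbs G (Ty s m C)) (EAbs G (Ty s' m C))
  | R8_ModProm G s C :
      refine_root (EAbs G (Ty s Capsule C)) (EAbs (ctx_mut_read G) (Ty s Mut C)).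

Inductive refine_step : expr -> expr -> Prop :=
  | RS_Root e e' : refine_root e e' -> refine_step e e'
  | RS_Assign0 e0 e0' f e1 :
      refine_step e0 e0' -> refine_step (EAssign e0 f e1) (EAssign e0' f e1)
  | RS_Assign1 e0 f e1 e1' :
      refine_step e1 e1' -> refine_step (EAssign e0 f e1) (EAssign e0 f e1')
  | RS_Field e e' f :
      refine_step e e' -> refine_step (EField e f) (EField e' f)
  | RS_Call0 e0 e0' m es :
      refine_step e0 e0' -> refine_step (ECall e0 m es) (ECall e0' m es)
  | RS_CallArg e0 m l1 e e' l2 :
      refine_step e e' ->
      refine_step (ECall e0 m (l1 ++ e :: l2)) (ECall e0 m (l1 ++ e' :: l2))
  | RS_NewArg s C l1 e e' l2 :
      refine_step e e' ->
      refine_step (ENew s C (l1 ++ e :: l2)) (ENew s C (l1 ++ e' :: l2)).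

Definition refines : expr -> expr -> Prop :=
  Relation_Operators.clos_refl_trans expr refine_step.

End CT.
End SIFO.

(* Extend SIFO typing to partial expressions by typing every abstract
   expression eA : [G; T] at its annotation T under G.  Each refinement rule
   replaces eA by an expression whose partial typing derivation is exactly the
   corresponding SIFO rule with the new abstract expressions as premises, and a
   step deep inside an expression only replaces a premise of the derivation, so
   refinement preserves partial typing.  The initial eA : [G; T] is partially
   typed at T, and on a concrete expression partial typing is SIFO typing. *)

From Pilot Require Import Defs.
From mathcomp Require Import all_boot all_order.
From Stdlib Require List.

Set Implicit Arguments.
Unset Strict Implicit.
Unset Printing Implicit Defensive.
Local Open Scope order_scope.

Section ListStep.
Variables (A : Type) (R : A -> A -> Prop).

Inductive list_step : list A -> list A -> Prop :=
  | list_step_head a a' l : R a a' -> list_step (a :: l) (a' :: l)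
  | list_step_tail a l l' : list_step l l' -> list_step (a :: l) (a :: l').

Lemma list_step_app l1 a a' l2 :
  R a a' -> list_step (l1 ++ a :: l2) (l1 ++ a' :: l2).
Proof. by move=> Raa'; elim: l1 => [|b l1 IH]; constructor. Qed.

End ListStep.

Section PartialTyping.
Context {disp : Order.disp_t} (L : tbJoinSemilatticeType disp).
Variable CT : classtable L.

Inductive ptyping : ctx L -> expr L -> ty L -> Prop :=
  | PT_Abs G T : ptyping G (EAbs G T) T
  | PT_Sub G e T T' :
      ptyping G e T' -> subty CT T' T -> ptyping G e T
  | PT_Var G x T :
      lookup G x = Some T -> ptyping G (EVar L x) T
  | PT_Field G e0 s0 m0 C0 fd m :
      ptyping G e0 (Ty s0 m0 C0) -> field_in CT fd C0 ->
      mdf_tri m0 (mdf_of_fmdf (fd_mdf fd)) = Some m ->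
      ptyping G (EField e0 (fd_name fd)) (Ty (s0 `|` fd_sec fd) m (fd_cls fd))
  | PT_Assign G e0 e1 s0 C0 fd :
      ptyping G e0 (Ty s0 Mut C0) ->
      ptyping G e1 (Ty (s0 `|` fd_sec fd) (mdf_of_fmdf (fd_mdf fd)) (fd_cls fd)) ->
      field_in CT fd C0 ->
      ptyping G (EAssign e0 (fd_name fd) e1)
              (Ty (s0 `|` fd_sec fd) (mdf_of_fmdf (fd_mdf fd)) (fd_cls fd))
  | PT_Call G e0 es m T0 Ts T :
      ptyping G e0 T0 -> ptypings G es Ts ->
      methTypes CT (tcls T0) m (T0 :: Ts, T) ->
      sec T0 <= sec T ->
      (forall Ti, List.In Ti Ts -> is_mut_or_capsule (tmdf Ti) -> sec T0 <= sec Ti) ->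
      ptyping G (ECall e0 m es) T
  | PT_New G s C es fs Ts :
      fields CT C = Some fs ->
      omap_list (Defs.lift s) (map (@fd_ty _ L) fs) = Some Ts ->
      ptypings G es Ts ->
      ptyping G (ENew s C es) (Ty s Mut C)
  | PT_Prom G e s C :
      ptyping (ctx_mut_read G) e (Ty s Mut C) -> ptyping G e (Ty s Capsule C)
  | PT_SecProm G e s s' m C :
      s' <= s -> ptyping G e (Ty s' m C) -> is_imm_or_capsule m ->
      ptyping G e (Ty s m C)
with ptypings : ctx L -> list (expr L) -> list (ty L) -> Prop :=
  | PTs_nil G : ptypings G nil nil
  | PTs_cons G e es T Ts :
      ptyping G e T -> ptypings G es Ts -> ptypings G (e :: es) (T :: Ts).

Scheme ptyping_mut := Induction for ptyping Sort Prop
with ptypings_mut := Induction for ptypings Sort Prop.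

(* Convertible to the list recursion inside [concrete], so it unfolds in place. *)
Fixpoint concrete_list (es : list (expr L)) : bool :=
  if es is e :: es' then concrete e && concrete_list es' else true.

Lemma ptyping_concrete G e T :
  ptyping G e T -> concrete e -> typing CT G e T.
Proof.
move: G e T; apply: (@ptyping_mut
  (fun G e T _ => concrete e -> typing CT G e T)
  (fun G es Ts _ => concrete_list es -> List.Forall2 (typing CT G) es Ts)).
- by [].
- by move=> G e T T' _ IH sub /IH /T_Sub; apply.
- by move=> G x T Gx _; apply: T_Var.
- by move=> G e0 s0 m0 C0 fd m _ IH fd_in tri /IH /T_Field; apply.
- move=> G e0 e1 s0 C0 fd _ IH0 _ IH1 fd_in /andP[c0 c1].
  by apply: T_Assign; [apply: IH0 | apply: IH1 | ].
- move=> G e0 es m T0 Ts T _ IH0 _ IHs mT sT sTs /andP[c0 cs].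
  by apply: T_Call; [apply: IH0 | apply: IHs | ..].
- by move=> G s C es fs Ts fsC liftTs _ IHs /IHs; apply: T_New fsC liftTs.
- by move=> G e s C _ IH /IH /T_Prom.
- by move=> G e s s' m C ss' _ IH im /IH /T_SecProm; apply.
- by [].
- by move=> G e es T Ts _ IH _ IHs /andP[/IH ? /IHs ?]; constructor.
Qed.

Lemma ptypings_EAbs G Ts : ptypings G (map (EAbs G) Ts) Ts.
Proof. by elim: Ts => [|T Ts IH]; constructor; first constructor. Qed.

Lemma refine_root_ptyping G T e' :
  refine_root CT (EAbs G T) e' -> ptyping G e' T.
Proof.
move=> root; inversion root; subst.
- exact: PT_Var.
- by apply: PT_Assign; [apply: PT_Abs | apply: PT_Abs | ].
- by apply: PT_Field; [apply: PT_Abs | | ].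
- by apply: PT_Call; [apply: PT_Abs | apply: ptypings_EAbs | ..].
- by apply: PT_New; [eassumption .. | apply: ptypings_EAbs].
- by apply: PT_Sub (PT_Abs _ _) _.
- by apply: PT_SecProm (PT_Abs _ _) _.
- exact/PT_Prom/PT_Abs.
Qed.

Lemma refine_root_EAbs e e' : refine_root CT e e' -> exists G T, e = EAbs G T.
Proof. by case; eauto. Qed.

Lemma refine_step_EAbs G T e' :
  refine_step CT (EAbs G T) e' -> refine_root CT (EAbs G T) e'.
Proof. by move=> step; inversion step. Qed.

Lemma refine_step_EVar x e' : ~ refine_step CT (EVar L x) e'.
Proof.
move=> step; inversion step as [? ? root | | | | | |].
by case/refine_root_EAbs: root => ? [].
Qed.

Lemma refine_step_EField e f e' :
  refine_step CT (EField e f) e' ->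
  exists2 e1, refine_step CT e e1 & e' = EField e1 f.
Proof.
move=> step; inversion step as [? ? root | | | | | |]; last by eauto.
by case/refine_root_EAbs: root => ? [].
Qed.

Lemma refine_step_EAssign e0 f e1 e' :
  refine_step CT (EAssign e0 f e1) e' ->
  (exists2 e0', refine_step CT e0 e0' & e' = EAssign e0' f e1) \/
  (exists2 e1', refine_step CT e1 e1' & e' = EAssign e0 f e1').
Proof.
move=> step; inversion step as [? ? root | | | | | |]; [| by eauto ..].
by case/refine_root_EAbs: root => ? [].
Qed.

Lemma refine_step_ECall e0 m es e' :
  refine_step CT (ECall e0 m es) e' ->
  (exists2 e0', refine_step CT e0 e0' & e' = ECall e0' m es) \/
  (exists2 es', list_step (refine_step CT) es es' & e' = ECall e0 m es').
Proof.
move=> step; inversion step as [? ? root | | | | | |]; subst; [| by eauto |].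
  by case/refine_root_EAbs: root => ? [].
by right; eexists; first by apply: list_step_app; eassumption.
Qed.

Lemma refine_step_ENew s C es e' :
  refine_step CT (ENew s C es) e' ->
  exists2 es', list_step (refine_step CT) es es' & e' = ENew s C es'.
Proof.
move=> step; inversion step as [? ? root | | | | | |]; subst.
  by case/refine_root_EAbs: root => ? [].
by eexists; first by apply: list_step_app; eassumption.
Qed.

Lemma ptyping_refine_step G e T e' :
  ptyping G e T -> refine_step CT e e' -> ptyping G e' T.
Proof.
move=> Ge; move: G e T Ge e'; apply: (@ptyping_mut
  (fun G e T _ => forall e', refine_step CT e e' -> ptyping G e' T)
  (fun G es Ts _ => forall es', list_step (refine_step CT) es es' -> ptypings G es' Ts)).
- by move=> G T e' /refine_step_EAbs/refine_root_ptyping.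
- by move=> G e T T' _ IH sub e' /IH /PT_Sub; apply.
- by move=> G x T _ e' /refine_step_EVar.
- move=> G e0 s0 m0 C0 fd m _ IH fd_in tri e' /refine_step_EField[e1 /IH e1T ->].
  exact: PT_Field e1T fd_in tri.
- move=> G e0 e1 s0 C0 fd e0T IH0 e1T IH1 fd_in e'.
  case/refine_step_EAssign=> [[e0' /IH0 e0'T ->] | [e1' /IH1 e1'T ->]].
  + exact: PT_Assign e0'T e1T fd_in.
  + exact: PT_Assign e0T e1'T fd_in.
- move=> G e0 es m T0 Ts T e0T IH0 esTs IHs mT sT sTs e'.
  case/refine_step_ECall=> [[e0' /IH0 e0'T ->] | [es' /IHs es'Ts ->]].
  + exact: PT_Call e0'T esTs mT sT sTs.
  + exact: PT_Call e0T es'Ts mT sT sTs.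
- move=> G s C es fs Ts fsC liftTs _ IHs e' /refine_step_ENew[es' /IHs esTs ->].
  exact: PT_New fsC liftTs esTs.
- by move=> G e s C _ IH e' /IH /PT_Prom.
- by move=> G e s s' m C ss' _ IH im e' /IH /PT_SecProm; apply.
- by move=> G es' step; inversion step.
- move=> G e es T Ts eT IH esTs IHs es' step.
  by inversion step; subst; constructor; [apply: IH | | | apply: IHs].
Qed.

Lemma ptyping_refines G e T e' :
  ptyping G e T -> refines CT e e' -> ptyping G e' T.
Proof.
move=> Ge ee'; elim: ee' G T Ge => [e1 e2 step | // | e1 e2 e3 _ IH12 _ IH23] G T.
- by move/ptyping_refine_step; apply.
- by move/IH12/IH23.
Qed.

End PartialTyping.

Theorem theorem1 (disp : Order.disp_t) (L : tbJoinSemilatticeType disp)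
  (CT : classtable L) (G : ctx L) (T : ty L) (e : expr L) :
  refines CT (EAbs G T) e -> concrete e -> typing CT G e T.
Proof.
move=> refined conc; apply: ptyping_concrete conc.
exact: ptyping_refines (PT_Abs _ G T) refined.
Qed.
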